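(* Let $n>m\geq 2$ and let $\mathbf{p}=(p_1,\ldots,p_n)$ be a probability vector with $p_1\geq\cdots\geq p_n\geq 0$. Let $\overline{\mathbf{q}}$ be the probability vector obtained from $\mathbf{p}$ by performing exactly $n-m$ Huffman merging steps, with ties broken arbitrarily. Then $$\mathtt{D}(\mathbf{p},\overline{\mathbf{q}})\leq\min_{\mathbf{q}}\mathtt{D}(\mathbf{p},\mathbf{q})+\alpha,\qquad \alpha=1-\frac{1+\ln(\ln 2)}{\ln 2}<0.08608,$$ where the minimum ranges over all probability vectors $\mathbf{q}=(q_1,\ldots,q_m)$ with $m$ components.
   Context: $H$ is Shannon entropy in bits. For probability vectors $\mathbf{p}$ (of length $n$) and $\mathbf{q}$ (of length $m$), $W(\mathbf{p},\mathbf{q})$ denotes the minimum entropy of a bivariate probability distribution (an $m\times n$ nonnegative matrix) whose marginals are $\mathbf{p}$ and $\mathbf{q}$. Then $$\mathtt{D}(\mathbf{p},\mathbf{q})=2W(\mathbf{p},\mathbf{q})-H(\mathbf{p})-H(\mathbf{q}),$$ which equals $\min\{H(X\mid Y)+H(Y\mid X)\}$ over all joint distributions of $(X,Y)$ with $X\sim\mathbf{p}$ and $Y\sim\mathbf{q}$. A Huffman merging step applied to a probability vector removes two smallest entries $x,y$, inserts the entry $x+y$, and re-sorts the vector in nonincreasing order. *)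

From Stdlib Require Import Reals Lra List Permutation Sorted ClassicalEpsilon.
Import ListNotations.
Open Scope R_scope.

Definition sumR (k : nat) (f : nat -> R) : R :=
  fold_right Rplus 0 (map f (seq 0 k)).

Definition log2 (x : R) : R := ln x / ln 2.

Definition entr (x : R) : R :=
  if Rle_dec x 0 then 0 else - (x * log2 x).

Definition is_prob (p : list R) : Prop :=
  Forall (fun x => 0 <= x) p /\ sumR (length p) (fun i => nth i p 0) = 1.

Definition H (p : list R) : R := sumR (length p) (fun i => entr (nth i p 0)).

(* A bivariate distribution with marginals p (length n) and q (length m):
   an m x n nonnegative matrix M (rows i < m, columns j < n). *)
Definition is_coupling (p q : list R) (M : nat -> nat -> R) : Prop :=
  (forall i j, (i < length q)%nat -> (j < length p)%nat -> 0 <= M i j) /\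
  (forall j, (j < length p)%nat -> sumR (length q) (fun i => M i j) = nth j p 0) /\
  (forall i, (i < length q)%nat -> sumR (length p) (fun j => M i j) = nth i q 0).

Definition Hjoint (m n : nat) (M : nat -> nat -> R) : R :=
  sumR m (fun i => sumR n (fun j => entr (M i j))).

Definition coupling_entropies (p q : list R) (h : R) : Prop :=
  exists M, is_coupling p q M /\ h = Hjoint (length q) (length p) M.

Definition is_inf (S : R -> Prop) (w : R) : Prop :=
  (forall h, S h -> w <= h) /\ (forall b, (forall h, S h -> b <= h) -> b <= w).

(* W(p,q): minimum (= infimum, it is attained) entropy of a coupling *)
Definition W (p q : list R) : R :=
  epsilon (inhabits 0) (is_inf (coupling_entropies p q)).

Definition D (p q : list R) : R := 2 * W p q - H p - H q.

Definition remove_two (i j : nat) (l : list R) : list R :=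
  map fst (filter (fun xk => negb (Nat.eqb (snd xk) i || Nat.eqb (snd xk) j))
                  (combine l (seq 0 (length l)))).

Definition huffman_step (p p' : list R) : Prop :=
  exists i j, i <> j /\ (i < length p)%nat /\ (j < length p)%nat /\
    (forall k, (k < length p)%nat -> k <> i -> k <> j ->
        nth i p 0 <= nth k p 0 /\ nth j p 0 <= nth k p 0) /\
    Permutation p' ((nth i p 0 + nth j p 0) :: remove_two i j p) /\
    Sorted Rge p'.

Inductive huffman_steps : nat -> list R -> list R -> Prop :=
  | hs0 : forall p, huffman_steps 0 p p
  | hsS : forall k p p' p'', huffman_step p p' -> huffman_steps k p' p'' ->
          huffman_steps (S k) p p''.

Definition alpha : R := 1 - (1 + ln (ln 2)) / ln 2.

From Stdlib Require Import Reals Lra Lia Arith List Permutation Sorted ClassicalEpsilon.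
Import ListNotations.
Open Scope R_scope.

(* Let mu be the smallest entry of qbar.

   Upper bound: qbar aggregates p, so the deterministic coupling of p and qbar has entropy H(p),
   whence D(p, qbar) <= H(p) - H(qbar).

   Lower bound: let q have m entries and M be any coupling of p and q. Then H(M) >= H(p), and a
   Gibbs-type inequality gives H(M) - H(q) >= H(p) - sum_j p_j log2 (1 / z_j) for suitable test
   weights z. Each Huffman step merges two entries that are at most every later entry, in particular
   at most mu; so every entry of qbar above 2 mu is an unmerged entry of p, and all other entries of
   qbar lie in [mu, 2 mu]. Take z_j = p_j on the entries above 2 mu and z_j = the mean of the other
   entries of qbar elsewhere. Since x log x lies below its chord over [mu, 2 mu], entries confined to
   [mu, 2 mu] have entropy at most alpha below that of their uniform average, so the cross entropy is
   at most H(qbar) + alpha. Hence D(p, q) >= H(p) - H(qbar) - alpha. *)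

(** * Finite sums *)

Definition lsum (l : list R) : R := fold_right Rplus 0 l.

Lemma lsum_app l1 l2 : lsum (l1 ++ l2) = lsum l1 + lsum l2.
Proof. induction l1 as [|x l1 IH]; simpl; [lra|]. rewrite IH; lra. Qed.

Lemma lsum_perm l l' : Permutation l l' -> lsum l = lsum l'.
Proof. induction 1; simpl; lra. Qed.

Lemma lsum_map_add {A} (f g : A -> R) l :
  lsum (map (fun x => f x + g x) l) = lsum (map f l) + lsum (map g l).
Proof. induction l as [|x l IH]; simpl; [lra|]. rewrite IH; lra. Qed.

Lemma lsum_map_scal {A} c (f : A -> R) l :
  lsum (map (fun x => c * f x) l) = c * lsum (map f l).
Proof. induction l as [|x l IH]; simpl; [lra|]. rewrite IH; lra. Qed.

Lemma lsum_map_const {A} c (l : list A) : lsum (map (fun _ => c) l) = c * INR (length l).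
Proof.
  induction l as [|x l IH]; [simpl; lra|].
  change (c + lsum (map (fun _ => c) l) = c * INR (S (length l))). rewrite IH, S_INR. lra.
Qed.

Lemma lsum_map_le {A} (f g : A -> R) l :
  (forall x, In x l -> f x <= g x) -> lsum (map f l) <= lsum (map g l).
Proof.
  induction l as [|x l IH]; simpl; intros Hfg; [lra|].
  pose proof (Hfg x (or_introl eq_refl)). pose proof (IH (fun y Hy => Hfg y (or_intror Hy))). lra.
Qed.

Lemma lsum_map_nonneg {A} (f : A -> R) l :
  (forall x, In x l -> 0 <= f x) -> 0 <= lsum (map f l).
Proof.
  intros Hf. rewrite <- (Rmult_0_l (INR (length l))), <- lsum_map_const.
  apply lsum_map_le, Hf.
Qed.

Lemma lsum_map_ge_term {A} (f : A -> R) l x :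
  (forall y, In y l -> 0 <= f y) -> In x l -> f x <= lsum (map f l).
Proof.
  induction l as [|y l IH]; simpl; intros Hf Hx; [contradiction|].
  pose proof (Hf y (or_introl eq_refl)).
  pose proof (lsum_map_nonneg f l (fun z Hz => Hf z (or_intror Hz))).
  destruct Hx as [<-|Hx]; [lra|].
  pose proof (IH (fun z Hz => Hf z (or_intror Hz)) Hx). lra.
Qed.

Lemma lsum_map_filter {A} (P : A -> bool) (g : A -> R) l :
  lsum (map g l) = lsum (map g (filter P l)) + lsum (map g (filter (fun x => negb (P x)) l)).
Proof. induction l as [|x l IH]; simpl; [lra|]. destruct (P x); simpl; rewrite IH; lra. Qed.

Lemma lsum_map_if {A} (P : A -> bool) (g : A -> R) l :
  lsum (map (fun x => if P x then g x else 0) l) = lsum (map g (filter P l)).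
Proof. induction l as [|x l IH]; simpl; [reflexivity|]. destruct (P x); simpl; rewrite IH; lra. Qed.

Lemma lsum_le_length_mul l c : (forall x, In x l -> x <= c) -> lsum l <= INR (length l) * c.
Proof.
  intros Hc. rewrite <- (map_id l) at 1. rewrite Rmult_comm, <- lsum_map_const.
  apply lsum_map_le, Hc.
Qed.

Lemma lsum_ge_length_mul l c : (forall x, In x l -> c <= x) -> INR (length l) * c <= lsum l.
Proof.
  intros Hc. rewrite <- (map_id l) at 2. rewrite Rmult_comm, <- lsum_map_const.
  apply lsum_map_le, Hc.
Qed.

Lemma lsum_filter (P : R -> bool) l :
  lsum l = lsum (filter P l) + lsum (filter (fun x => negb (P x)) l).
Proof. rewrite <- (map_id l), (lsum_map_filter P), !map_id. reflexivity. Qed.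

Lemma lsum_nonneg l : (forall x, In x l -> 0 <= x) -> 0 <= lsum l.
Proof. intros Hl. rewrite <- (map_id l). apply lsum_map_nonneg, Hl. Qed.

Lemma INR_length_filter {A} (P : A -> bool) l :
  INR (length l) = INR (length (filter P l)) + INR (length (filter (fun x => negb (P x)) l)).
Proof.
  rewrite <- (Rmult_1_l (INR (length l))), <- lsum_map_const, (lsum_map_filter P).
  rewrite !lsum_map_const. ring.
Qed.

Lemma sumR_lsum k f : sumR k f = lsum (map f (seq 0 k)).
Proof. reflexivity. Qed.

Lemma sumR_S k f : sumR (S k) f = sumR k f + f k.
Proof. rewrite !sumR_lsum, seq_S, map_app, lsum_app. simpl. lra. Qed.

Lemma sumR_shift k f : sumR (S k) f = f 0%nat + sumR k (fun i => f (S i)).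
Proof. rewrite !sumR_lsum. cbn [seq map]. rewrite <- seq_shift, map_map. reflexivity. Qed.

Lemma sumR_ext k f g : (forall i, (i < k)%nat -> f i = g i) -> sumR k f = sumR k g.
Proof.
  intros Hfg. rewrite !sumR_lsum. f_equal. apply map_ext_in.
  intros i Hi. apply in_seq in Hi. apply Hfg. lia.
Qed.

Lemma sumR_add k f g : sumR k (fun i => f i + g i) = sumR k f + sumR k g.
Proof. apply lsum_map_add. Qed.

Lemma sumR_scal k c f : sumR k (fun i => c * f i) = c * sumR k f.
Proof. apply lsum_map_scal. Qed.

Lemma sumR_sub k f g : sumR k (fun i => f i - g i) = sumR k f - sumR k g.
Proof.
  unfold Rminus. rewrite sumR_add.
  rewrite (sumR_ext k (fun i => - g i) (fun i => -1 * g i)) by (intros; ring).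
  rewrite sumR_scal. ring.
Qed.

Lemma sumR_const k c : sumR k (fun _ => c) = c * INR k.
Proof. rewrite sumR_lsum, lsum_map_const, length_seq. reflexivity. Qed.

Lemma sumR_le k f g : (forall i, (i < k)%nat -> f i <= g i) -> sumR k f <= sumR k g.
Proof. intros Hfg. apply lsum_map_le. intros i Hi. apply in_seq in Hi. apply Hfg. lia. Qed.

Lemma sumR_nonneg k f : (forall i, (i < k)%nat -> 0 <= f i) -> 0 <= sumR k f.
Proof. intros Hf. apply lsum_map_nonneg. intros i Hi. apply in_seq in Hi. apply Hf. lia. Qed.

Lemma sumR_ge_term k f a : (forall i, (i < k)%nat -> 0 <= f i) -> (a < k)%nat -> f a <= sumR k f.
Proof.
  intros Hf Ha. apply lsum_map_ge_term; [|apply in_seq; lia].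
  intros i Hi. apply in_seq in Hi. apply Hf. lia.
Qed.

Lemma sumR_swap m n (F : nat -> nat -> R) :
  sumR m (fun i => sumR n (fun j => F i j)) = sumR n (fun j => sumR m (fun i => F i j)).
Proof.
  induction m as [|m IH].
  - rewrite (sumR_ext n _ (fun _ => 0)) by reflexivity. rewrite sumR_const. unfold sumR. simpl. lra.
  - rewrite sumR_S, IH, <- sumR_add. apply sumR_ext. intros j _. rewrite sumR_S. reflexivity.
Qed.

Lemma sumR_indicator k a (g : nat -> R) :
  (a < k)%nat -> sumR k (fun l => if Nat.eqb l a then g l else 0) = g a.
Proof.
  induction k as [|k IH]; intros Ha; [lia|]. rewrite sumR_S.
  destruct (Nat.eqb_spec k a) as [->|Hka].
  - rewrite (sumR_ext a _ (fun _ => 0)), sumR_const; [lra|].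
    intros l Hl. destruct (Nat.eqb_spec l a); [lia|reflexivity].
  - rewrite IH by lia. lra.
Qed.

Lemma sumR_nth (g : R -> R) l : sumR (length l) (fun i => g (nth i l 0)) = lsum (map g l).
Proof.
  induction l as [|x l IH]; [reflexivity|].
  cbn [length]. rewrite sumR_shift. simpl nth. rewrite IH. reflexivity.
Qed.

Lemma prob_nth_nonneg l i : is_prob l -> 0 <= nth i l 0.
Proof.
  intros [Hl _]. destruct (Nat.lt_ge_cases i (length l)) as [Hi|Hi].
  - rewrite Forall_forall in Hl. apply Hl, nth_In, Hi.
  - rewrite nth_overflow by exact Hi. lra.
Qed.

Lemma prob_nonneg l x : is_prob l -> In x l -> 0 <= x.
Proof. intros [Hl _]. rewrite Forall_forall in Hl. apply Hl. Qed.

Lemma lsum_prob l : is_prob l -> lsum l = 1.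
Proof. intros [_ Hl]. rewrite <- (map_id l), <- (sumR_nth (fun x => x)). exact Hl. Qed.

(** * Entropy inequalities *)

Lemma ln2_pos : 0 < ln 2.
Proof. pose proof ln_lt_2. lra. Qed.

Lemma ln_le x y : 0 < x -> x <= y -> ln x <= ln y.
Proof. intros Hx [Hxy| ->]; [left; apply ln_increasing|]; lra. Qed.

Lemma ln_le_sub_1 x : 0 < x -> ln x <= x - 1.
Proof. intros Hx. pose proof (exp_ineq1_le (ln x)) as He. rewrite exp_ln in He by lra. lra. Qed.

Lemma ln_div x y : 0 < x -> 0 < y -> ln (x / y) = ln x - ln y.
Proof. intros Hx Hy. unfold Rdiv. rewrite ln_mult, ln_Rinv; auto with real. Qed.

Lemma ln_ge_1_sub_div x y : 0 < x -> 0 < y -> 1 - y / x <= ln x - ln y.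
Proof.
  intros Hx Hy. pose proof (ln_le_sub_1 (y / x) ltac:(apply Rdiv_lt_0_compat; lra)) as Hl.
  rewrite ln_div in Hl by lra. lra.
Qed.

Lemma entr_eq x : 0 <= x -> entr x = - (x * log2 x).
Proof. intros Hx. unfold entr. destruct (Rle_dec x 0); [replace x with 0 by lra; ring|reflexivity]. Qed.

Lemma entr_0 : entr 0 = 0.
Proof. rewrite entr_eq; lra. Qed.

Lemma entr_ge_of_le x y : 0 <= x -> x <= y -> - (x * log2 y) <= entr x.
Proof.
  intros Hx Hxy. rewrite entr_eq by lra. destruct Hx as [Hx| <-]; [|lra].
  unfold log2. pose proof ln2_pos. pose proof (ln_le x y Hx Hxy).
  apply Ropp_le_contravar. unfold Rdiv. rewrite <- !Rmult_assoc.
  apply Rmult_le_compat_r; [left; apply Rinv_0_lt_compat; lra|].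
  apply Rmult_le_compat_l; lra.
Qed.

(* One cell of Gibbs' inequality:
   [x log (a b / (x z)) >= x log (a / w) >= x (1 - w / a)] when [x z <= b w]. *)
Lemma gibbs_term x a b z w :
  0 <= x -> (0 < x -> 0 < a /\ 0 < b /\ 0 < z) -> x * z <= b * w ->
  (x - x * w / a) / ln 2 <= entr x + x * log2 a + x * log2 b - x * log2 z.
Proof.
  intros Hx Hpos Hxz. rewrite entr_eq by lra. destruct Hx as [Hx| <-].
  2: { unfold Rdiv. rewrite !Rmult_0_l. lra. }
  destruct (Hpos Hx) as [Ha [Hb Hz]].
  assert (Hw : 0 < w).
  { assert (0 < x * z) by (apply Rmult_lt_0_compat; lra).
    destruct (Rle_lt_dec w 0); [|lra]. assert (0 <= b * - w) by (apply Rmult_le_pos; lra). lra. }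
  assert (Hratio : 0 <= ln b + ln w - ln x - ln z).
  { pose proof (ln_le (x * z) (b * w) ltac:(apply Rmult_lt_0_compat; lra) Hxz) as Hl.
    rewrite !ln_mult in Hl by lra. lra. }
  pose proof (ln_ge_1_sub_div a w Ha Hw).
  pose proof ln2_pos. unfold log2.
  replace (- (x * (ln x / ln 2)) + x * (ln a / ln 2) + x * (ln b / ln 2) - x * (ln z / ln 2))
    with (x * (ln a + ln b - ln x - ln z) / ln 2) by (field; lra).
  replace (x - x * w / a) with (x * (1 - w / a)) by (field; lra).
  apply Rmult_le_compat_r; [left; apply Rinv_0_lt_compat; lra|].
  apply Rmult_le_compat_l; lra.
Qed.

Lemma xlnx_tangent x a : 0 < x -> 0 < a -> a * ln a + (1 + ln a) * (x - a) <= x * ln x.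
Proof.
  intros Hx Ha. pose proof (ln_ge_1_sub_div x a Hx Ha).
  assert (Hl : x * (1 - a / x) <= x * (ln x - ln a)) by (apply Rmult_le_compat_l; lra).
  replace (x * (1 - a / x)) with (x - a) in Hl by (field; lra). nra.
Qed.

(* The right-hand side is the chord of [x ln x] through [mu] and [2 mu]. *)
Lemma xlnx_chord v mu : 0 < mu -> mu <= v <= 2 * mu ->
  v * ln v <= v * ln mu + 2 * (v - mu) * ln 2.
Proof.
  intros Hmu Hv.
  pose proof (xlnx_tangent mu v ltac:(lra) ltac:(lra)) as T1.
  pose proof (xlnx_tangent (2 * mu) v ltac:(lra) ltac:(lra)) as T2.
  rewrite ln_mult in T2 by lra.
  assert (A : (2 * mu - v) * (v * ln v + (1 + ln v) * (mu - v)) <= (2 * mu - v) * (mu * ln mu))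
    by (apply Rmult_le_compat_l; lra).
  assert (B : (v - mu) * (v * ln v + (1 + ln v) * (2 * mu - v)) <= (v - mu) * (2 * mu * (ln 2 + ln mu)))
    by (apply Rmult_le_compat_l; lra).
  apply (Rmult_le_reg_l mu); nra.
Qed.

Lemma alpha_mul_ln2 : alpha * ln 2 = ln 2 - 1 - ln (ln 2).
Proof. unfold alpha. pose proof ln2_pos. field. lra. Qed.

Lemma alpha_nonneg : 0 <= alpha.
Proof.
  pose proof ln2_pos. pose proof (ln_le_sub_1 (ln 2) ln2_pos). pose proof alpha_mul_ln2.
  nra.
Qed.

(* With [u = N mu / s], the claim is [s (ln u + 2 (1 - u) ln 2) <= alpha ln 2]; the maximum of
   [ln u - 2 u ln 2] is attained at [u = 1 / (2 ln 2)], which is where [alpha] comes from. *)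
Lemma chord_sum_le s mu N : 0 < mu -> 1 <= N -> N * mu <= s <= 1 ->
  s * ln mu + 2 * (s - N * mu) * ln 2 <= s * ln (s / N) + alpha * ln 2.
Proof.
  intros Hmu HN Hs. pose proof ln2_pos.
  assert (HNmu : 0 < N * mu) by (apply Rmult_lt_0_compat; lra).
  set (u := N * mu / s).
  assert (Hu : 0 < u) by (apply Rdiv_lt_0_compat; lra).
  assert (Hln : ln mu = ln (s / N) + ln u).
  { rewrite <- ln_mult by (try apply Rdiv_lt_0_compat; lra). f_equal. unfold u. field. lra. }
  assert (Hmax : ln u <= 2 * u * ln 2 - 1 - ln 2 - ln (ln 2)).
  { pose proof (ln_le_sub_1 (u * 2 * ln 2) ltac:(apply Rmult_lt_0_compat; lra)) as Hl.
    rewrite !ln_mult in Hl by lra. lra. }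
  assert (Nmu : N * mu = u * s) by (unfold u; field; lra).
  rewrite alpha_mul_ln2, Hln, Nmu.
  pose proof (ln_le_sub_1 (ln 2) ln2_pos). nra.
Qed.

Lemma entropy_ge_spread (L : list R) mu :
  0 <= mu -> (forall v, In v L -> mu <= v <= 2 * mu) -> L <> [] -> lsum L <= 1 ->
  - (lsum L * log2 (lsum L / INR (length L))) - alpha <= lsum (map entr L).
Proof.
  intros Hmu HL Hne Hs1. pose proof ln2_pos. pose proof alpha_nonneg.
  destruct Hmu as [Hmu| <-].
  2: { assert (HL0 : forall v, In v L -> v = 0) by (intros v Hv; specialize (HL v Hv); lra).
       assert (Hs : lsum L = 0).
       { pose proof (lsum_le_length_mul L 0 ltac:(intros v Hv; rewrite (HL0 v Hv); lra)).
         pose proof (lsum_ge_length_mul L 0 ltac:(intros v Hv; rewrite (HL0 v Hv); lra)). lra. }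
       rewrite (map_ext_in entr (fun _ => 0) L) by (intros v Hv; rewrite (HL0 v Hv); apply entr_0).
       rewrite Hs, lsum_map_const. lra. }
  set (N := INR (length L)).
  assert (HN : 1 <= N) by (unfold N; destruct L; [congruence|apply (le_INR 1); simpl; lia]).
  assert (HNmu : N * mu <= lsum L) by (apply lsum_ge_length_mul; intros v Hv; apply HL, Hv).
  assert (Hchord : forall v, In v L ->
    - (ln mu + 2 * ln 2) / ln 2 * v + 2 * mu <= entr v).
  { intros v Hv. specialize (HL v Hv). rewrite entr_eq by lra. unfold log2.
    pose proof (xlnx_chord v mu Hmu HL).
    apply (Rmult_le_reg_r (ln 2)); [lra|]. field_simplify; lra. }
  eapply Rle_trans; [|apply lsum_map_le; exact Hchord].
  rewrite lsum_map_add, lsum_map_scal, lsum_map_const, map_id. fold N.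
  pose proof (chord_sum_le (lsum L) mu N Hmu HN (conj HNmu Hs1)).
  unfold log2. apply (Rmult_le_reg_r (ln 2)); [lra|]. field_simplify; lra.
Qed.

(** * The numerical value of alpha *)

Lemma INR_fact_S n : INR (fact (S n)) = INR (S n) * INR (fact n).
Proof. rewrite fact_simpl, mult_INR. reflexivity. Qed.

Lemma E1_S x N : E1 x (S N) = E1 x N + / INR (fact (S N)) * x ^ S N.
Proof. reflexivity. Qed.

Lemma E1_le_exp x N : 0 <= x -> E1 x N <= exp x.
Proof.
  intros Hx. apply growing_ineq; [|apply E1_cvg].
  intros k. rewrite E1_S.
  assert (0 <= / INR (fact (S k)) * x ^ S k).
  { apply Rmult_le_pos; [left; apply Rinv_0_lt_compat, INR_fact_lt_0|apply pow_le, Hx]. }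
  lra.
Qed.

(* For [0 <= x <= 1] the series of [exp (- x)] is alternating with decreasing terms. *)
Lemma E1_odd_le_exp_neg x N : 0 <= x <= 1 -> E1 (- x) (S (2 * N)) <= exp (- x).
Proof.
  intros Hx.
  assert (Ealt : forall K, E1 (- x) K = sum_f_R0 (tg_alt (fun k => x ^ k / INR (fact k))) K).
  { intros K. unfold E1, tg_alt. apply sum_eq. intros k _.
    replace (- x) with (-1 * x) by ring. rewrite Rpow_mult_distr. unfold Rdiv. ring. }
  rewrite Ealt. apply alternated_series_ineq.
  - intros k. pose proof (INR_fact_lt_0 k). pose proof (pos_INR k).
    replace (x ^ S k / INR (fact (S k))) with (x / INR (S k) * (x ^ k / INR (fact k)))
      by (rewrite INR_fact_S, S_INR; simpl; field; lra).
    rewrite <- (Rmult_1_l (x ^ k / INR (fact k))) at 2.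
    apply Rmult_le_compat_r.
    + apply Rmult_le_pos; [apply pow_le; lra|left; apply Rinv_0_lt_compat; lra].
    + rewrite S_INR. apply (Rmult_le_reg_r (INR k + 1)); [lra|].
      unfold Rdiv. rewrite Rmult_assoc, Rinv_l; lra.
  - apply cv_speed_pow_fact.
  - intros eps Heps. destruct (E1_cvg (- x) eps Heps) as [K HK].
    exists K. intros k Hk. rewrite <- Ealt. apply HK, Hk.
Qed.

(* Factorials are expanded into products of small [INR]s: reducing [fact] to a unary numeral
   is not feasible. *)
Ltac eval_E1 := repeat rewrite E1_S; unfold E1, sum_f_R0;
  repeat rewrite INR_fact_S; cbn [INR fact]; lra.

Lemma ln2_lower : 0.693147 <= ln 2.
Proof.
  rewrite <- (ln_exp 0.693147). apply ln_le; [apply exp_pos|].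
  (* [Ropp 0.693147], since [-0.693147] would parse as a distinct negative literal. *)
  assert (Hneg : 1 / 2 <= exp (Ropp 0.693147)).
  { eapply Rle_trans; [|apply (E1_odd_le_exp_neg _ 5); lra]. cbn [Nat.mul Nat.add]. eval_E1. }
  pose proof (exp_pos 0.693147).
  assert (exp 0.693147 * exp (Ropp 0.693147) = 1) by (rewrite <- exp_plus, Rplus_opp_r; apply exp_0).
  nra.
Qed.

Lemma ln2_upper : ln 2 <= 0.693148.
Proof.
  rewrite <- (ln_exp 0.693148). apply ln_le; [lra|].
  eapply Rle_trans; [|apply (E1_le_exp _ 9); lra]. eval_E1.
Qed.

Lemma ln_ln2_lower : - 0.366516 <= ln (ln 2).
Proof.
  apply (Rle_trans _ (ln 0.693147)); [|apply ln_le; [lra|exact ln2_lower]].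
  replace (- 0.366516) with (ln (exp (Ropp 0.366516))) by (rewrite ln_exp; lra).
  apply ln_le; [apply exp_pos|].
  assert (Hpos : 1 / 0.693147 <= exp 0.366516).
  { eapply Rle_trans; [|apply (E1_le_exp _ 7); lra]. eval_E1. }
  pose proof (exp_pos 0.366516).
  assert (exp 0.366516 * exp (Ropp 0.366516) = 1) by (rewrite <- exp_plus, Rplus_opp_r; apply exp_0).
  apply (Rmult_le_reg_l (exp 0.366516)); [lra|]. nra.
Qed.

Lemma alpha_lt : alpha < 0.08608.
Proof.
  pose proof ln2_lower. pose proof ln2_upper. pose proof ln_ln2_lower. pose proof alpha_mul_ln2.
  apply (Rmult_lt_reg_r (ln 2)); lra.
Qed.

(** * Couplings *)

Lemma sub_le_share x a s : 0 <= x <= a -> 0 < a -> 0 <= s -> x - s <= x / a * (a - s).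
Proof.
  intros Hx Ha Hs. replace (x / a * (a - s)) with (x - s * (x / a)) by (field; lra).
  assert (x / a <= 1) by (apply (Rmult_le_reg_r a); [|unfold Rdiv; rewrite Rmult_assoc, Rinv_l]; lra).
  assert (s * (x / a) <= s * 1) by (apply Rmult_le_compat_l; lra). lra.
Qed.

Definition exceeds (T x : R) : bool := if Rlt_dec T x then true else false.

Lemma exceedsP T x : Bool.reflect (T < x) (exceeds T x).
Proof. unfold exceeds. destruct (Rlt_dec T x); constructor; assumption. Qed.

Section Coupling.
Variables (p q : list R) (M : nat -> nat -> R).
Hypothesis HM : is_coupling p q M.

Lemma coupling_nonneg i j : (i < length q)%nat -> (j < length p)%nat -> 0 <= M i j.
Proof. apply HM. Qed.

Lemma coupling_col_sum j : (j < length p)%nat -> sumR (length q) (fun i => M i j) = nth j p 0.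
Proof. apply HM. Qed.

Lemma coupling_row_sum i : (i < length q)%nat -> sumR (length p) (fun j => M i j) = nth i q 0.
Proof. apply HM. Qed.

Lemma coupling_le_left i j : (i < length q)%nat -> (j < length p)%nat -> M i j <= nth j p 0.
Proof.
  intros Hi Hj. rewrite <- (coupling_col_sum j Hj).
  apply (sumR_ge_term _ (fun i => M i j)); [intros k Hk; apply coupling_nonneg|]; assumption.
Qed.

Lemma coupling_le_right i j : (i < length q)%nat -> (j < length p)%nat -> M i j <= nth i q 0.
Proof.
  intros Hi Hj. rewrite <- (coupling_row_sum i Hi).
  apply (sumR_ge_term _ (fun j => M i j)); [intros k Hk; apply coupling_nonneg|]; assumption.
Qed.

Lemma sumR_left_marginal (g : nat -> R) :
  sumR (length p) (fun j => nth j p 0 * g j) =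
  sumR (length q) (fun i => sumR (length p) (fun j => M i j * g j)).
Proof.
  rewrite sumR_swap. apply sumR_ext. intros j Hj.
  rewrite <- (coupling_col_sum j Hj), Rmult_comm, <- sumR_scal.
  apply sumR_ext. intros. ring.
Qed.

Lemma sumR_right_marginal (g : nat -> R) :
  sumR (length q) (fun i => nth i q 0 * g i) =
  sumR (length q) (fun i => sumR (length p) (fun j => M i j * g i)).
Proof.
  apply sumR_ext. intros i Hi.
  rewrite <- (coupling_row_sum i Hi), Rmult_comm, <- sumR_scal.
  apply sumR_ext. intros. ring.
Qed.

Lemma H_left_marginal :
  H p = sumR (length q) (fun i => sumR (length p) (fun j => - (M i j * log2 (nth j p 0)))).
Proof.
  rewrite <- (sumR_ext _ (fun i => sumR _ (fun j => M i j * - log2 (nth j p 0))))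
    by (intros; apply sumR_ext; intros; ring).
  rewrite <- sumR_left_marginal. apply sumR_ext. intros j Hj.
  rewrite entr_eq; [ring|]. rewrite <- (coupling_col_sum j Hj).
  apply sumR_nonneg. intros. apply coupling_nonneg; auto.
Qed.

Lemma H_right_marginal :
  H q = sumR (length q) (fun i => sumR (length p) (fun j => - (M i j * log2 (nth i q 0)))).
Proof.
  rewrite <- (sumR_ext _ (fun i => sumR _ (fun j => M i j * - log2 (nth i q 0))))
    by (intros; apply sumR_ext; intros; ring).
  rewrite <- sumR_right_marginal. apply sumR_ext. intros i Hi.
  rewrite entr_eq; [ring|]. rewrite <- (coupling_row_sum i Hi).
  apply sumR_nonneg. intros. apply coupling_nonneg; auto.
Qed.

Lemma H_le_Hjoint : H p <= Hjoint (length q) (length p) M.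
Proof.
  rewrite H_left_marginal. apply sumR_le. intros i Hi. apply sumR_le. intros j Hj.
  apply entr_ge_of_le; [apply coupling_nonneg|apply coupling_le_left]; auto.
Qed.

(* Sum [gibbs_term] over all cells: the [w]-terms add up to [(1 - sum_i w i) / ln 2 >= 0]. *)
Lemma Hjoint_sub_H_ge (z w : nat -> R) :
  is_prob q ->
  (forall j, (j < length p)%nat -> 0 < nth j p 0 -> 0 < z j) ->
  (forall i, (i < length q)%nat -> 0 <= w i) ->
  sumR (length q) w <= 1 ->
  (forall i j, (i < length q)%nat -> (j < length p)%nat -> M i j * z j <= nth j p 0 * w i) ->
  H p - sumR (length p) (fun j => - (nth j p 0 * log2 (z j))) <= Hjoint (length q) (length p) M - H q.
Proof.
  intros [_ Hq1] Hz Hw Hsw Hmz. pose proof ln2_pos as Hln2.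
  set (term i j := entr (M i j) + M i j * log2 (nth i q 0) + M i j * log2 (nth j p 0) - M i j * log2 (z j)).
  assert (Hsplit : Hjoint (length q) (length p) M - H q - (H p - sumR (length p) (fun j => - (nth j p 0 * log2 (z j))))
                   = sumR (length q) (fun i => sumR (length p) (term i))).
  { rewrite H_left_marginal, H_right_marginal.
    rewrite (sumR_ext (length p) _ (fun j => nth j p 0 * - log2 (z j))) by (intros; ring).
    rewrite sumR_left_marginal. unfold Hjoint. rewrite <- !sumR_sub.
    apply sumR_ext. intros i _. rewrite <- !sumR_sub. apply sumR_ext. intros j _.
    unfold term. ring. }
  assert (Hrow : forall i, (i < length q)%nat ->
            (nth i q 0 - w i) / ln 2 <= sumR (length p) (term i)).
  { intros i Hi.
    apply (Rle_trans _ (sumR (length p) (fun j => / ln 2 * (1 - w i / nth i q 0) * M i j))).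
    - rewrite (sumR_scal _ _ (fun j => M i j)), (coupling_row_sum i Hi).
      destruct (Req_dec (nth i q 0) 0) as [->|Hq0].
      + rewrite Rmult_0_r. specialize (Hw i Hi).
        assert (0 < / ln 2) by (apply Rinv_0_lt_compat; lra). unfold Rdiv. nra.
      + right. field. lra.
    - apply sumR_le. intros j Hj.
      pose proof (coupling_nonneg i j Hi Hj). pose proof (coupling_le_left i j Hi Hj).
      pose proof (coupling_le_right i j Hi Hj).
      apply (Rle_trans _ ((M i j - M i j * w i / nth i q 0) / ln 2)); [right; unfold Rdiv; ring|].
      apply gibbs_term; [lra| |apply Hmz; auto].
      intros Hpos. split; [lra|split; [lra|apply Hz; auto; lra]]. }
  assert (0 <= sumR (length q) (fun i => (nth i q 0 - w i) / ln 2)).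
  { unfold Rdiv. rewrite (sumR_ext _ _ (fun i => / ln 2 * (nth i q 0 - w i))) by (intros; ring).
    rewrite sumR_scal, sumR_sub, Hq1. apply Rmult_le_pos; [left; apply Rinv_0_lt_compat|]; lra. }
  pose proof (sumR_le _ _ _ Hrow). lra.
Qed.

(* Test weights: [z] keeps the entries above [T] and replaces the others by [sig]; row [i] gets
   weight [sig] plus the share [M i l (1 - sig / p_l)] of every column [l] above [T]. *)
Lemma Hjoint_sub_H_ge_threshold (T sig : R) :
  is_prob q -> 0 <= sig <= T -> T <= 2 * sig ->
  INR (length q) * sig
    + sumR (length p) (fun l => if exceeds T (nth l p 0) then nth l p 0 - sig else 0) <= 1 ->
  H p - sumR (length p) (fun j => - (nth j p 0 * log2 (if exceeds T (nth j p 0) then nth j p 0 else sig)))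
    <= Hjoint (length q) (length p) M - H q.
Proof.
  intros Hq [Hsig HsigT] HT Hbudget.
  set (share i l := if exceeds T (nth l p 0) then M i l / nth l p 0 * (nth l p 0 - sig) else 0).
  assert (Hshare : forall i l, (i < length q)%nat -> (l < length p)%nat -> 0 <= share i l).
  { intros i l Hi Hl. unfold share. destruct (exceedsP T (nth l p 0)); [|lra].
    apply Rmult_le_pos; [apply Rmult_le_pos|lra].
    - apply coupling_nonneg; auto.
    - left. apply Rinv_0_lt_compat. lra. }
  assert (Hrow : forall i, (i < length q)%nat -> sig <= sig + sumR (length p) (share i)).
  { intros i Hi. pose proof (sumR_nonneg (length p) (share i) (fun l => Hshare i l Hi)). lra. }
  apply (Hjoint_sub_H_ge _ (fun i => sig + sumR (length p) (share i)) Hq).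
  - intros j Hj Hpj. destruct (exceedsP T (nth j p 0)); lra.
  - intros i Hi. specialize (Hrow i Hi). lra.
  - rewrite sumR_add, sumR_const, sumR_swap, Rmult_comm.
    rewrite (sumR_ext (length p) _ (fun l => if exceeds T (nth l p 0) then nth l p 0 - sig else 0));
      [exact Hbudget|].
    intros l Hl. unfold share. destruct (exceedsP T (nth l p 0)).
    + rewrite (sumR_ext _ _ (fun i => (nth l p 0 - sig) / nth l p 0 * M i l)) by (intros; unfold Rdiv; ring).
      rewrite sumR_scal, (coupling_col_sum l Hl). field. lra.
    + rewrite sumR_const. ring.
  - intros i j Hi Hj.
    pose proof (coupling_nonneg i j Hi Hj). pose proof (coupling_le_left i j Hi Hj).
    pose proof (Hrow i Hi).
    destruct (exceedsP T (nth j p 0)) as [Hbig|Hsmall].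
    + pose proof (sumR_ge_term _ (share i) j (fun l => Hshare i l Hi) Hj) as Hterm.
      unfold share at 1 in Hterm. destruct (exceedsP T (nth j p 0)); [|lra].
      pose proof (sub_le_share (M i j) (nth j p 0) sig ltac:(lra) ltac:(lra) Hsig).
      rewrite Rmult_comm. apply Rmult_le_compat_l; lra.
    + apply Rmult_le_compat; lra.
Qed.

End Coupling.

Lemma product_is_coupling p q : is_prob p -> is_prob q ->
  is_coupling p q (fun i j => nth i q 0 * nth j p 0).
Proof.
  intros Hp Hq. split; [|split].
  - intros i j _ _. apply Rmult_le_pos; apply prob_nth_nonneg; assumption.
  - intros j _. rewrite (sumR_ext _ _ (fun i => nth j p 0 * nth i q 0)) by (intros; ring).
    rewrite sumR_scal. destruct Hq as [_ ->]. ring.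
  - intros i _. rewrite sumR_scal. destruct Hp as [_ ->]. ring.
Qed.

Lemma W_is_inf p q : is_prob p -> is_prob q -> is_inf (coupling_entropies p q) (W p q).
Proof.
  intros Hp Hq. unfold W. apply epsilon_spec.
  (* Stdlib's completeness gives suprema, so take the supremum of the negated entropies. *)
  set (E x := coupling_entropies p q (- x)).
  assert (Hbound : bound E).
  { exists (- H p). intros x [M [HM Ex]]. pose proof (H_le_Hjoint p q M HM). lra. }
  assert (Hne : exists x, E x).
  { exists (- Hjoint (length q) (length p) (fun i j => nth i q 0 * nth j p 0)).
    eexists. split; [apply product_is_coupling; assumption|]. lra. }
  destruct (completeness E Hbound Hne) as [s [Hub Hlub]].
  exists (- s). split.
  - intros h Hh. assert (Eh : E (- h)) by (unfold E; rewrite Ropp_involutive; exact Hh).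
    specialize (Hub _ Eh). lra.
  - intros b Hb. assert (s <= - b); [|lra].
    apply Hlub. intros x Hx. specialize (Hb _ Hx). lra.
Qed.

Lemma W_le_Hjoint p q M : is_prob p -> is_prob q -> is_coupling p q M ->
  W p q <= Hjoint (length q) (length p) M.
Proof. intros Hp Hq HM. apply (W_is_inf p q Hp Hq). exists M. auto. Qed.

Lemma W_ge p q b : is_prob p -> is_prob q ->
  (forall M, is_coupling p q M -> b <= Hjoint (length q) (length p) M) -> b <= W p q.
Proof. intros Hp Hq Hb. apply (W_is_inf p q Hp Hq). intros h [M [HM ->]]. auto. Qed.

(** * Aggregation *)

Definition aggregates (p q : list R) : Prop :=
  exists f : nat -> nat, (forall j, (j < length p)%nat -> (f j < length q)%nat) /\
    forall i, (i < length q)%nat ->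
      nth i q 0 = sumR (length p) (fun j => if Nat.eqb (f j) i then nth j p 0 else 0).

Lemma aggregates_trans p p' q : aggregates p p' -> aggregates p' q -> aggregates p q.
Proof.
  intros [f1 [Hf1 E1]] [f2 [Hf2 E2]]. exists (fun j => f2 (f1 j)). split; [auto|].
  intros i Hi. rewrite E2 by exact Hi.
  transitivity (sumR (length p') (fun l => sumR (length p) (fun j =>
     if Nat.eqb (f1 j) l then (if Nat.eqb (f2 l) i then nth j p 0 else 0) else 0))).
  - apply sumR_ext. intros l Hl. destruct (Nat.eqb (f2 l) i).
    + apply E1, Hl.
    + rewrite (sumR_ext _ _ (fun _ => 0)), sumR_const; [ring|].
      intros j _. destruct (Nat.eqb (f1 j) l); reflexivity.
  - rewrite sumR_swap. apply sumR_ext. intros j Hj.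
    rewrite (sumR_ext _ _ (fun l => if Nat.eqb l (f1 j) then (if Nat.eqb (f2 l) i then nth j p 0 else 0) else 0))
      by (intros; rewrite Nat.eqb_sym; reflexivity).
    apply sumR_indicator, Hf1, Hj.
Qed.

Lemma aggregates_cons x p q : aggregates p q -> aggregates (x :: p) (x :: q).
Proof.
  intros [f [Hf E]]. exists (fun j => match j with 0 => 0 | S j => S (f j) end)%nat. split.
  - intros [|j] Hj; cbn [length] in *; [lia|]. specialize (Hf j ltac:(lia)). lia.
  - intros [|i] Hi; cbn [length]; rewrite sumR_shift; cbn [nth Nat.eqb].
    + rewrite sumR_const. ring.
    + rewrite E by (cbn [length] in Hi; lia). ring.
Qed.

Lemma aggregates_refl p : aggregates p p.
Proof.
  induction p as [|x p IH]; [|apply aggregates_cons, IH].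
  exists (fun j => j). split; intros; simpl in *; lia.
Qed.

Lemma aggregates_swap x y p : aggregates (y :: x :: p) (x :: y :: p).
Proof.
  exists (fun j => match j with 0 => 1 | 1 => 0 | j => j end)%nat. split.
  - intros [|[|j]] Hj; cbn [length] in *; lia.
  - intros [|[|i]] Hi; cbn [length]; rewrite !sumR_shift; cbn [nth Nat.eqb].
    + rewrite sumR_const. ring.
    + rewrite sumR_const. ring.
    + rewrite sumR_indicator by (cbn [length] in Hi; lia). ring.
Qed.

Lemma aggregates_merge x y p : aggregates (x :: y :: p) (x + y :: p).
Proof.
  exists (fun j => match j with 0 => 0 | 1 => 0 | S j => j end)%nat. split.
  - intros [|[|j]] Hj; cbn [length] in *; lia.
  - intros [|i] Hi; cbn [length]; rewrite !sumR_shift; cbn [nth Nat.eqb].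
    + rewrite sumR_const. ring.
    + rewrite sumR_indicator by (cbn [length] in Hi; lia). ring.
Qed.

Lemma aggregates_perm p q : Permutation p q -> aggregates p q.
Proof.
  induction 1.
  - apply aggregates_refl.
  - apply aggregates_cons; assumption.
  - apply aggregates_swap.
  - eapply aggregates_trans; eassumption.
Qed.

Lemma aggregates_is_prob p q : is_prob p -> aggregates p q -> is_prob q.
Proof.
  intros Hp [f [Hf E]]. split.
  - apply Forall_forall. intros x Hx. apply In_nth with (d := 0) in Hx as [i [Hi <-]].
    rewrite E by exact Hi. apply sumR_nonneg. intros j _.
    destruct (Nat.eqb (f j) i); [apply prob_nth_nonneg, Hp|lra].
  - rewrite (sumR_ext _ _ _ E), sumR_swap. destruct Hp as [_ <-].
    apply sumR_ext. intros j Hj.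
    rewrite (sumR_ext _ _ (fun i => if Nat.eqb i (f j) then nth j p 0 else 0))
      by (intros; rewrite Nat.eqb_sym; reflexivity).
    apply sumR_indicator, Hf, Hj.
Qed.

(* The deterministic coupling that sends each [p_j] to the block it is merged into. *)
Lemma W_le_H_of_aggregates p q : is_prob p -> aggregates p q -> W p q <= H p.
Proof.
  intros Hp Hagg. pose proof (aggregates_is_prob p q Hp Hagg) as Hq.
  destruct Hagg as [f [Hf E]].
  set (M i j := if Nat.eqb (f j) i then nth j p 0 else 0).
  assert (Hfi : forall j g, (j < length p)%nat ->
            sumR (length q) (fun i => if Nat.eqb (f j) i then g i else 0) = g (f j)).
  { intros j g Hj. rewrite <- (sumR_indicator (length q) (f j) g (Hf j Hj)).
    apply sumR_ext. intros i _. rewrite Nat.eqb_sym. reflexivity. }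
  assert (HM : is_coupling p q M).
  { split; [|split].
    - intros i j _ _. unfold M. destruct (Nat.eqb (f j) i); [apply prob_nth_nonneg, Hp|lra].
    - intros j Hj. apply (Hfi j (fun _ => nth j p 0) Hj).
    - intros i Hi. symmetry. apply E, Hi. }
  apply (Rle_trans _ _ _ (W_le_Hjoint p q M Hp Hq HM)). right.
  unfold Hjoint, H. rewrite sumR_swap. apply sumR_ext. intros j Hj.
  rewrite <- (Hfi j (fun _ => entr (nth j p 0)) Hj). apply sumR_ext. intros i _.
  unfold M. destruct (Nat.eqb (f j) i); [reflexivity|apply entr_0].
Qed.

(** * Huffman merging *)

Lemma combine_seq (l : list R) s :
  combine l (seq s (length l)) = map (fun k => (nth (k - s) l 0, k)) (seq s (length l)).
Proof.
  revert s. induction l as [|x l IH]; intros s; [reflexivity|].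
  cbn [length seq combine map]. rewrite Nat.sub_diag, IH. f_equal.
  apply map_ext_in. intros k Hk. apply in_seq in Hk.
  replace (k - s)%nat with (S (k - S s)) by lia. reflexivity.
Qed.

Lemma map_nth_seq (l : list R) : map (fun k => nth k l 0) (seq 0 (length l)) = l.
Proof.
  induction l as [|x l IH]; [reflexivity|].
  cbn [length seq map]. rewrite <- seq_shift, map_map. cbn [nth]. rewrite IH. reflexivity.
Qed.

Lemma remove_two_eq i j l :
  remove_two i j l = map (fun k => nth k l 0)
    (filter (fun k => negb (Nat.eqb k i || Nat.eqb k j)) (seq 0 (length l))).
Proof.
  unfold remove_two. rewrite combine_seq, filter_map_swap, map_map.
  apply map_ext. intros k. rewrite Nat.sub_0_r. reflexivity.
Qed.

Lemma in_remove_two i j l x : In x (remove_two i j l) ->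
  exists k, (k < length l)%nat /\ k <> i /\ k <> j /\ x = nth k l 0.
Proof.
  rewrite remove_two_eq. intros Hx. apply in_map_iff in Hx as [k [<- Hk]].
  apply filter_In in Hk as [Hk Hb]. apply in_seq in Hk.
  destruct (Nat.eqb_spec k i), (Nat.eqb_spec k j); try discriminate.
  exists k. repeat split; auto; lia.
Qed.

Lemma Permutation_remove_two i j (l : list R) :
  i <> j -> (i < length l)%nat -> (j < length l)%nat ->
  Permutation l (nth i l 0 :: nth j l 0 :: remove_two i j l).
Proof.
  intros Hij Hi Hj. rewrite remove_two_eq. rewrite <- (map_nth_seq l) at 1.
  set (rest := filter (fun k => negb (Nat.eqb k i || Nat.eqb k j)) (seq 0 (length l))).
  change (Permutation (map (fun k => nth k l 0) (seq 0 (length l)))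
                      (map (fun k => nth k l 0) (i :: j :: rest))).
  apply Permutation_map, NoDup_Permutation.
  - apply seq_NoDup.
  - assert (Hrest : forall k, In k rest -> k <> i /\ k <> j).
    { intros k Hk. apply filter_In in Hk as [_ Hb].
      destruct (Nat.eqb_spec k i), (Nat.eqb_spec k j); easy. }
    constructor; [|constructor; [|apply NoDup_filter, seq_NoDup]].
    + intros [E|E]; [lia|]. apply Hrest in E. tauto.
    + intros E. apply Hrest in E. tauto.
  - intros k. rewrite in_seq. split.
    + intros Hk. destruct (Nat.eq_dec k i) as [->|Hki]; [now left|].
      destruct (Nat.eq_dec k j) as [->|Hkj]; [now right; left|]. right; right.
      apply filter_In. split; [apply in_seq; lia|].
      destruct (Nat.eqb_spec k i), (Nat.eqb_spec k j); easy.
    + intros [<-|[<-|Hk]]; [lia|lia|]. apply filter_In in Hk as [Hk _]. apply in_seq in Hk. lia.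
Qed.

Lemma huffman_step_spec p p' : huffman_step p p' ->
  exists a b r, Permutation p (a :: b :: r) /\ Permutation p' (a + b :: r) /\
    (forall x, In x r -> a <= x /\ b <= x).
Proof.
  intros [i [j [Hij [Hi [Hj [Hmin [Hp' _]]]]]]].
  exists (nth i p 0), (nth j p 0), (remove_two i j p).
  split; [apply Permutation_remove_two; assumption|]. split; [assumption|].
  intros x Hx. apply in_remove_two in Hx as [k [Hk [Hki [Hkj ->]]]]. auto.
Qed.

Lemma huffman_steps_aggregates k p q : huffman_steps k p q ->
  aggregates p q /\ (length q + k = length p)%nat.
Proof.
  induction 1 as [p|k p p' q Hstep _ [IHagg IHlen]]; [split; [apply aggregates_refl|lia]|].
  destruct (huffman_step_spec p p' Hstep) as [a [b [r [Hp [Hp' _]]]]].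
  split.
  - apply (aggregates_trans _ (a :: b :: r)); [apply aggregates_perm, Hp|].
    apply (aggregates_trans _ (a + b :: r)); [apply aggregates_merge|].
    apply (aggregates_trans _ p'); [apply aggregates_perm, Permutation_sym, Hp'|exact IHagg].
  - apply Permutation_length in Hp, Hp'. cbn [length] in *. lia.
Qed.

Lemma huffman_steps_lower_bound k p q c : huffman_steps k p q -> 0 <= c ->
  (forall x, In x p -> c <= x) -> forall y, In y q -> c <= y.
Proof.
  induction 1 as [|k p p' q Hstep _ IH]; intros Hc Hp; [exact Hp|]. apply IH; [exact Hc|].
  destruct (huffman_step_spec p p' Hstep) as [a [b [r [Hpr [Hp'r _]]]]].
  assert (Hr : forall x, In x (a :: b :: r) -> c <= x)
    by (intros x Hx; apply Hp, (Permutation_in _ (Permutation_sym Hpr) Hx)).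
  intros x Hx. apply (Permutation_in _ Hp'r) in Hx as [<-|Hx].
  - pose proof (Hr a (or_introl eq_refl)). pose proof (Hr b (or_intror (or_introl eq_refl))). lra.
  - apply Hr. right. right. exact Hx.
Qed.

Lemma Permutation_filter {A} (P : A -> bool) l l' :
  Permutation l l' -> Permutation (filter P l) (filter P l').
Proof.
  induction 1; cbn [filter]; auto.
  - destruct (P x); auto.
  - destruct (P x), (P y); auto using perm_swap.
  - eapply perm_trans; eassumption.
Qed.

(* A merged pair [a, b] is bounded by every later entry, hence by [y]; so [a], [b] and [a + b]
   all stay at most [T]. *)
Lemma huffman_steps_keep_large k p q : huffman_steps k p q -> (forall x, In x p -> 0 <= x) ->
  forall T y, In y q -> 2 * y <= T -> Permutation (filter (exceeds T) q) (filter (exceeds T) p).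
Proof.
  induction 1 as [|k p p' q Hstep Hsteps IH]; intros Hp T y Hy HyT; [reflexivity|].
  destruct (huffman_step_spec p p' Hstep) as [a [b [r [Hpr [Hp'r Hr]]]]].
  assert (Hab : forall x, In x (a :: b :: r) -> 0 <= x)
    by (intros x Hx; apply Hp, (Permutation_in _ (Permutation_sym Hpr) Hx)).
  pose proof (Hab a (or_introl eq_refl)) as Ha0. pose proof (Hab b (or_intror (or_introl eq_refl))) as Hb0.
  assert (Hp' : forall x, In x p' -> a <= x /\ b <= x).
  { intros x Hx. apply (Permutation_in _ Hp'r) in Hx as [<-|Hx]; [lra|auto]. }
  assert (Hay : a <= y)
    by (apply (huffman_steps_lower_bound _ _ _ a Hsteps); auto; intros x Hx; apply Hp', Hx).
  assert (Hby : b <= y)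
    by (apply (huffman_steps_lower_bound _ _ _ b Hsteps); auto; intros x Hx; apply Hp', Hx).
  eapply perm_trans; [apply (IH (fun x Hx => Rle_trans _ _ _ Ha0 (proj1 (Hp' x Hx))) T y Hy HyT)|].
  eapply perm_trans; [apply Permutation_filter, Hp'r|].
  eapply perm_trans; [|apply Permutation_filter, Permutation_sym, Hpr].
  cbn [filter].
  destruct (exceedsP T (a + b)), (exceedsP T a), (exceedsP T b); try lra. reflexivity.
Qed.

(** * The lower bound *)

Lemma exists_min (l : list R) : l <> [] -> exists mu, In mu l /\ forall y, In y l -> mu <= y.
Proof.
  induction l as [|x l IH]; intros Hl; [congruence|].
  destruct l as [|x' l].
  - exists x. split; [now left|]. intros y [<-|[]]. lra.
  - destruct IH as [mu [Hmu Hmin]]; [discriminate|].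
    destruct (Rle_dec x mu).
    + exists x. split; [now left|]. intros y [<-|Hy]; [lra|]. specialize (Hmin y Hy). lra.
    + exists mu. split; [now right|]. intros y [<-|Hy]; [lra|auto].
Qed.

Section HuffmanLowerBound.
Variables (p qbar : list R) (mu : R).
Hypotheses (Hp : is_prob p) (Hqbar : is_prob qbar).
Hypotheses (Hmu : In mu qbar) (Hmin : forall y, In y qbar -> mu <= y).
Hypothesis Hlarge : Permutation (filter (exceeds (2 * mu)) qbar) (filter (exceeds (2 * mu)) p).

Let small := filter (fun x => negb (exceeds (2 * mu) x)) qbar.
Let sig := lsum small / INR (length small).

Lemma small_range v : In v small -> mu <= v <= 2 * mu.
Proof.
  intros Hv. apply filter_In in Hv as [Hv Hb]. split; [apply Hmin, Hv|].
  destruct (exceedsP (2 * mu) v); [discriminate|lra].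
Qed.

Lemma mu_in_small : In mu small.
Proof.
  apply filter_In. split; [exact Hmu|]. destruct (exceedsP (2 * mu) mu); [|reflexivity].
  pose proof (prob_nonneg qbar mu Hqbar Hmu). lra.
Qed.

Lemma small_nonempty : small <> [].
Proof. intros E. pose proof mu_in_small as Hin. rewrite E in Hin. contradiction. Qed.

Lemma small_length_pos : 1 <= INR (length small).
Proof. pose proof small_nonempty. apply (le_INR 1). destruct small; [congruence|simpl; lia]. Qed.

Lemma sig_mul_length : sig * INR (length small) = lsum small.
Proof. pose proof small_length_pos. unfold sig. field. lra. Qed.

Lemma sig_range : mu <= sig <= 2 * mu.
Proof.
  pose proof small_length_pos. pose proof sig_mul_length.
  pose proof (lsum_ge_length_mul small mu (fun v Hv => proj1 (small_range v Hv))).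
  pose proof (lsum_le_length_mul small (2 * mu) (fun v Hv => proj2 (small_range v Hv))).
  split; apply (Rmult_le_reg_r (INR (length small))); lra.
Qed.

Lemma lsum_large_add_small : lsum (filter (exceeds (2 * mu)) p) + lsum small = 1.
Proof.
  rewrite <- (lsum_perm _ _ Hlarge), <- (lsum_prob qbar Hqbar). symmetry. apply lsum_filter.
Qed.

Lemma cross_entropy_le :
  sumR (length p) (fun j => - (nth j p 0 * log2 (if exceeds (2 * mu) (nth j p 0) then nth j p 0 else sig)))
    <= H qbar + alpha.
Proof.
  rewrite (sumR_nth (fun x => - (x * log2 (if exceeds (2 * mu) x then x else sig)))), (lsum_map_filter (exceeds (2 * mu))).
  rewrite (map_ext_in _ entr (filter (exceeds (2 * mu)) p)).
  2: { intros x Hx. apply filter_In in Hx as [Hx Hb]. rewrite Hb.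
       symmetry. apply entr_eq, (prob_nonneg p); assumption. }
  rewrite (map_ext_in _ (fun x => - log2 sig * x) (filter (fun x => negb (exceeds (2 * mu) x)) p)).
  2: { intros x Hx. apply filter_In in Hx as [_ Hb].
       destruct (exceeds (2 * mu) x); [discriminate|ring]. }
  rewrite lsum_map_scal, map_id.
  assert (Hsmall_p : lsum (filter (fun x => negb (exceeds (2 * mu) x)) p) = lsum small).
  { pose proof (lsum_filter (exceeds (2 * mu)) p) as Hsplit. rewrite (lsum_prob p Hp) in Hsplit.
    pose proof lsum_large_add_small. lra. }
  assert (Hlarge_H : lsum (map entr (filter (exceeds (2 * mu)) p)) = lsum (map entr (filter (exceeds (2 * mu)) qbar)))
    by (apply lsum_perm, Permutation_map, Permutation_sym, Hlarge).
  assert (HHq : H qbar = lsum (map entr (filter (exceeds (2 * mu)) qbar)) + lsum (map entr small))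
    by (unfold H; rewrite sumR_nth; apply lsum_map_filter).
  rewrite Hsmall_p, Hlarge_H, HHq.
  assert (Hs1 : lsum small <= 1).
  { pose proof lsum_large_add_small.
    assert (0 <= lsum (filter (exceeds (2 * mu)) p)); [|lra].
    apply lsum_nonneg. intros x Hx. apply filter_In in Hx as [Hx _]. apply (prob_nonneg p x Hp Hx). }
  pose proof (entropy_ge_spread small mu (prob_nonneg qbar mu Hqbar Hmu) small_range small_nonempty Hs1)
    as Hspread.
  fold sig in Hspread. nra.
Qed.

Lemma threshold_budget (q : list R) : length q = length qbar ->
  INR (length q) * sig
    + sumR (length p) (fun l => if exceeds (2 * mu) (nth l p 0) then nth l p 0 - sig else 0) = 1.
Proof.
  intros Hlen.
  rewrite (sumR_nth (fun x => if exceeds (2 * mu) x then x - sig else 0)), lsum_map_if.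
  rewrite (lsum_map_add (fun x => x) (fun _ => - sig)), map_id, lsum_map_const.
  rewrite <- (Permutation_length Hlarge), <- (lsum_perm _ _ Hlarge), Hlen.
  rewrite (INR_length_filter (exceeds (2 * mu)) qbar). fold small.
  pose proof (lsum_filter (exceeds (2 * mu)) qbar) as Hsplit. rewrite (lsum_prob qbar Hqbar) in Hsplit.
  pose proof sig_mul_length. fold small in Hsplit. lra.
Qed.

Lemma Hjoint_lower_bound q M : is_prob q -> length q = length qbar -> is_coupling p q M ->
  H p - H qbar - alpha <= 2 * Hjoint (length q) (length p) M - H p - H q.
Proof.
  intros Hq Hlen HM. pose proof sig_range.
  pose proof (H_le_Hjoint p q M HM).
  pose proof (Hjoint_sub_H_ge_threshold p q M HM (2 * mu) sig Hq ltac:(lra) ltac:(lra)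
                (Req_le _ _ (threshold_budget q Hlen))).
  pose proof cross_entropy_le. lra.
Qed.

End HuffmanLowerBound.

Theorem mainTheorem14 (n m : nat) (p qbar : list R) :
  (2 <= m)%nat -> (m < n)%nat ->
  length p = n -> is_prob p -> Sorted Rge p ->
  huffman_steps (n - m) p qbar ->
  (forall q : list R, length q = m -> is_prob q ->
     D p qbar <= D p q + alpha) /\ alpha < 0.08608.
Proof.
  intros Hm Hmn Hlp Hp _ Hsteps. split; [|exact alpha_lt].
  intros q Hlq Hq.
  destruct (huffman_steps_aggregates _ _ _ Hsteps) as [Hagg Hlen].
  pose proof (aggregates_is_prob p qbar Hp Hagg) as Hqbar.
  pose proof (W_le_H_of_aggregates p qbar Hp Hagg) as Hupper.
  destruct (exists_min qbar) as [mu [Hmu Hmin]]; [intros ->; simpl in Hlen; lia|].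
  pose proof (huffman_steps_keep_large _ _ _ Hsteps (fun x => prob_nonneg p x Hp) (2 * mu) mu Hmu
                ltac:(lra)) as Hlarge.
  assert (Hlower : (H p - H qbar - alpha + H p + H q) / 2 <= W p q).
  { apply W_ge; [exact Hp|exact Hq|]. intros M HM.
    pose proof (Hjoint_lower_bound p qbar mu Hp Hqbar Hmu Hmin Hlarge q M Hq ltac:(lia) HM). lra. }
  unfold D. lra.
Qed.
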